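(* Let $d\in\mathbb N$, and assume (A1) and (A2). Then $H(M^{{\boldsymbol\eta},m})\subseteq H(M^{{\boldsymbol\eta}^\uparrow,m^\uparrow})$ (both spaces consisting of functions on $D^d$) and the identical embedding has norm at most one.
   Context: For a reproducing kernel $M$ over a set $\mathfrak Z$, $H(M)$ is its RKHS with norm $\|\cdot\|_M$. Write $[d]=\{1,\dots,d\}$, $\mathcal U_d$ the power set of $[d]$, weights $\mathcal W_d$ the families $(\gamma_u)_{u\in\mathcal U_d}$ of non-negative reals. For $C>0$, $T^\uparrow_{d,C}\colon\mathcal W_d\to\mathcal W_d$, $(T^\uparrow_{d,C}{\boldsymbol\gamma})_u=\sum_{v\supseteq u}C^{2|v|}\gamma_v$, and $\mathcal S_{d,C}=\{{\boldsymbol\gamma}\in\mathcal W_d:\sum_vC^{2|v|}\gamma_v<\infty\}$. Given a reproducing kernel $m\ne0$ over a non-empty set $D$ and $u\in\mathcal U_d$, let $m_u(\mathbf x,\mathbf y)=\prod_{j\in u}m(x_j,y_j)$ ($m_\emptyset=1$), and for weights ${\boldsymbol\eta}$ let $M^{{\boldsymbol\eta},m}(\mathbf x,\mathbf y)=\sum_{u\in\mathcal U_d}\eta_u m_u(\mathbf x,\mathbf y)$ for $\mathbf x,\mathbf y\in D^d$. Assumptions: (A1) $m,m^\uparrow$ are nonzero reproducing kernels over $D$ with $H(m)\subseteq H(1+m^\uparrow)$, and $C\ge\sup\{\|f\|_{1+m^\uparrow}:f\in H(m),\|f\|_m\le1\}$, $C>0$. (A2) ${\boldsymbol\eta}\in\mathcal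 S_{d,C}$ and ${\boldsymbol\eta}^\uparrow=T^\uparrow_{d,C}{\boldsymbol\eta}$. *)

From mathcomp Require Import all_boot all_order all_algebra.
From mathcomp Require Import reals.
Set Implicit Arguments. Unset Strict Implicit. Unset Printing Implicit Defensive.
Import Order.TTheory GRing.Theory Num.Theory.
Local Open Scope ring_scope.

Definition reproducing_kernel {R : realType} {X : Type} (K : X -> X -> R) : Prop :=
  (forall x y, K x y = K y x) /\
  forall (n : nat) (pts : 'I_n -> X) (a : 'I_n -> R),
    0 <= \sum_(i < n) \sum_(j < n) a i * a j * K (pts i) (pts j).

Definition fdiff {R : realType} {X : Type} (f g : X -> R) : X -> R :=
  fun x => f x - g x.

(* By uniqueness of
   the RKHS, any such (H, ip) is H(K) with its inner product. *)
Record is_RKHS {R : realType} {X : Type} (K : X -> X -> R)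
    (H : (X -> R) -> Prop) (ip : (X -> R) -> (X -> R) -> R) : Prop := {
  rk_zero : H (fun _ => 0);
  rk_lin : forall a f g, H f -> H g -> H (fun x => a * f x + g x);
  rk_sym : forall f g, H f -> H g -> ip f g = ip g f;
  rk_linl : forall a f g h, H f -> H g -> H h ->
      ip (fun x => a * f x + g x) h = a * ip f h + ip g h;
  rk_pos : forall f, H f -> 0 <= ip f f;
  rk_def : forall f, H f -> ip f f = 0 -> f = (fun _ => 0);
  rk_complete : forall u : nat -> X -> R, (forall n, H (u n)) ->
      (forall e, 0 < e -> exists N, forall n k, (N <= n)%N -> (N <= k)%N ->
          ip (fdiff (u n) (u k)) (fdiff (u n) (u k)) < e) ->
      exists g, H g /\ forall e, 0 < e -> exists N, forall n, (N <= n)%N ->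
          ip (fdiff (u n) g) (fdiff (u n) g) < e;
  rk_mem : forall y, H (fun x => K x y);
  rk_repr : forall f y, H f -> ip f (fun x => K x y) = f y
}.

Definition rk_norm {R : realType} {X : Type} (ip : (X -> R) -> (X -> R) -> R)
  (f : X -> R) : R := Num.sqrt (ip f f).

Definition is_weight {R : realType} (d : nat) (gamma : {set 'I_d} -> R) : Prop :=
  forall u, 0 <= gamma u.

(* S_{d,C}: weights with sum_v C^{2|v|} gamma_v < oo (automatic, finitely
   many subsets); we keep the weight condition. *)
Definition in_S {R : realType} (d : nat) (C : R) (gamma : {set 'I_d} -> R) : Prop :=
  is_weight gamma.

Definition T_up {R : realType} (d : nat) (C : R) (gamma : {set 'I_d} -> R)
  : {set 'I_d} -> R :=
  fun u => \sum_(v : {set 'I_d} | u \subset v) C ^+ (2 * #|v|) * gamma v.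

Definition prod_kernel {R : realType} {D : Type} (d : nat) (m : D -> D -> R)
  (u : {set 'I_d}) (x y : 'I_d -> D) : R :=
  \prod_(j in u) m (x j) (y j).

Definition M_kernel {R : realType} {D : Type} (d : nat) (eta : {set 'I_d} -> R)
  (m : D -> D -> R) (x y : 'I_d -> D) : R :=
  \sum_(u : {set 'I_d}) eta u * prod_kernel m u x y.

(* Aronszajn's inclusion theorem reduces the claim to the kernel inequality
   M^{eta,m} <= M^{eta^up,m^up} in the Loewner order. The bound on C makes
   C^2 (1 + m^up) - m positive semidefinite (via Cauchy-Schwarz on kernel
   sections), Schur's product theorem lets such inequalities be multiplied
   coordinatewise, and expanding prod_{j in v} (1 + m^up) over the subsets of v
   turns M^{eta^up,m^up} into sum_v eta_v prod_{j in v} C^2 (1 + m^up(x_j, y_j)).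
   For the converse half of Aronszajn's theorem, a function f with
   |sum_i a_i f(x_i)|^2 <= c ||sum_i a_i K(., x_i)||^2 is obtained as the limit of
   a minimizing sequence of ||h||^2 - 2 <f, h> over finite kernel combinations h,
   which is Cauchy by the parallelogram law. *)

From mathcomp Require Import classical_sets boolp.
From mathcomp Require Import all_boot all_order all_algebra.
From mathcomp Require Import reals.
From mathcomp Require Import ring lra.
Import Order.TTheory GRing.Theory Num.Theory.
Local Open Scope ring_scope.
Set Implicit Arguments. Unset Strict Implicit.

Lemma le0_of_le_mul_eps (R : realFieldType) (x k : R) :
  0 <= k -> (forall e, 0 < e -> x <= k * e) -> x <= 0.
Proof.
move=> k_ge0 x_le; apply/ler_addgt0Pr => e e_gt0; rewrite add0r.
have k1_gt0 : 0 < k + 1 by lra.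
apply: le_trans (x_le (e / (k + 1)) (divr_gt0 e_gt0 k1_gt0)) _.
rewrite mulrCA ler_piMr ?ler_pdivrMr //; lra.
Qed.

Lemma inv_succ_eventually_lt (R : realType) (e : R) : 0 < e ->
  exists N, forall n, (N <= n)%N -> n.+1%:R^-1 < e.
Proof.
move=> /ltr_add_invr [N]; rewrite add0r => N_lt; exists N => n Nn.
by apply: le_lt_trans N_lt; rewrite lef_pV2 ?posrE ?ltr0Sn // ler_nat ltnS.
Qed.

Lemma sqr_le_of_quad_ge0 (R : realFieldType) (a b c : R) :
  (forall t, 0 <= a + 2 * b * t + c * t ^+ 2) -> 0 <= c -> b ^+ 2 <= a * c.
Proof.
move=> quad_ge0 c_ge0.
have a_ge0 : 0 <= a by have := quad_ge0 0; rewrite mulr0 expr0n /= mulr0 !addr0.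
have [c0|c_neq0] := eqVneq c 0.
  subst c; rewrite mulr0; have [->|b_neq0] := eqVneq b 0; first by rewrite expr0n.
  have := quad_ge0 (- (a + 1) / (2 * b)).
  have -> : 2 * b * (- (a + 1) / (2 * b)) = - (a + 1) by field.
  lra.
have c_gt0 : 0 < c by rewrite lt_def c_neq0 c_ge0.
have := quad_ge0 (- b / c).
have -> : a + 2 * b * (- b / c) + c * (- b / c) ^+ 2 = a - b ^+ 2 / c by field.
by rewrite subr_ge0 ler_pdivrMr.
Qed.

Lemma fdiffE (R : realType) (X : Type) (f g : X -> R) :
  fdiff f g = (fun x => -1 * g x + f x).
Proof. by apply: funext => x; rewrite /fdiff mulN1r addrC. Qed.

Section KernelCombinations.
Variables (R : realType) (X : Type).
Implicit Types (K : X -> X -> R) (f g : X -> R) (s t : seq (R * X)).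

(* A seq [(a_i, x_i)] encodes the functional f |-> sum_i a_i f(x_i) (ecomb), the
   function sum_i a_i K(., x_i) (kcomb) and the Gram form of two such (kform). *)
Definition ecomb f s : R := \sum_(p <- s) p.1 * f p.2.

Definition kcomb K s : X -> R := fun x => ecomb (K x) s.

Definition kform K s t : R := ecomb (kcomb K t) s.

Definition scale_comb (c : R) s : seq (R * X) := [seq (c * p.1, p.2) | p <- s].

Lemma ecomb_nil f : ecomb f [::] = 0.
Proof. by rewrite /ecomb big_nil. Qed.

Lemma ecomb_cons f p s : ecomb f (p :: s) = p.1 * f p.2 + ecomb f s.
Proof. by rewrite /ecomb big_cons. Qed.

Lemma ecomb_cat f s t : ecomb f (s ++ t) = ecomb f s + ecomb f t.
Proof. by rewrite /ecomb big_cat. Qed.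

Lemma ecomb_scale f c s : ecomb f (scale_comb c s) = c * ecomb f s.
Proof. by rewrite /ecomb big_map mulr_sumr; apply: eq_bigr => p _ /=; rewrite mulrA. Qed.

Lemma ecombD f g s : ecomb (fun x => f x + g x) s = ecomb f s + ecomb g s.
Proof. by rewrite /ecomb -big_split; apply: eq_bigr => p _; rewrite mulrDr. Qed.

Lemma ecombZ c f s : ecomb (fun x => c * f x) s = c * ecomb f s.
Proof. by rewrite /ecomb mulr_sumr; apply: eq_bigr => p _; rewrite mulrCA. Qed.

Lemma kcomb_nil K : kcomb K [::] = (fun _ => 0).
Proof. by apply: funext => x; rewrite /kcomb ecomb_nil. Qed.

Lemma kcomb_cons K p s : kcomb K (p :: s) = (fun x => p.1 * K x p.2 + kcomb K s x).
Proof. by apply: funext => x; rewrite /kcomb ecomb_cons. Qed.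

Lemma kcomb_cat K s t : kcomb K (s ++ t) = (fun x => kcomb K s x + kcomb K t x).
Proof. by apply: funext => x; rewrite /kcomb ecomb_cat. Qed.

Lemma kcomb_scale K c s : kcomb K (scale_comb c s) = (fun x => c * kcomb K s x).
Proof. by apply: funext => x; rewrite /kcomb ecomb_scale. Qed.

Lemma kform_sym K s t : (forall x y, K x y = K y x) -> kform K s t = kform K t s.
Proof.
move=> K_sym; rewrite /kform /kcomb /ecomb.
under eq_bigr => p _ do rewrite mulr_sumr.
rewrite exchange_big /=; apply: eq_bigr => q _; rewrite mulr_sumr.
by apply: eq_bigr => p _; rewrite K_sym mulrCA.
Qed.

Lemma kform_catl K s1 s2 t : kform K (s1 ++ s2) t = kform K s1 t + kform K s2 t.
Proof. exact: ecomb_cat. Qed.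

Lemma kform_catr K s t1 t2 : kform K s (t1 ++ t2) = kform K s t1 + kform K s t2.
Proof. by rewrite /kform kcomb_cat ecombD. Qed.

Lemma kform_scalel K c s t : kform K (scale_comb c s) t = c * kform K s t.
Proof. exact: ecomb_scale. Qed.

Lemma kform_scaler K c s t : kform K s (scale_comb c t) = c * kform K s t.
Proof. by rewrite /kform kcomb_scale ecombZ. Qed.

Lemma kform_single K c x s : kform K [:: (c, x)] s = c * kcomb K s x.
Proof. by rewrite /kform ecomb_cons ecomb_nil addr0. Qed.

Lemma kcomb_single K c y x : kcomb K [:: (c, y)] x = c * K x y.
Proof. by rewrite /kcomb ecomb_cons ecomb_nil addr0. Qed.

End KernelCombinations.

Section PsdKernels.
Variables (R : realType) (X : Type).
Implicit Types (K A B : X -> X -> R) (s t : seq (R * X)).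

Record psd_kernel K : Prop := {
  psd_sym : forall x y, K x y = K y x;
  psd_form_ge0 : forall s, 0 <= kform K s s }.

Definition psd_le K1 K2 : Prop := psd_kernel (fun x y => K2 x y - K1 x y).

Lemma kformD K1 K2 s t :
  kform (fun x y => K1 x y + K2 x y) s t = kform K1 s t + kform K2 s t.
Proof.
rewrite /kform -ecombD; congr ecomb; apply: funext => x.
by rewrite /kcomb ecombD.
Qed.

Lemma kformZ c K s t : kform (fun x y => c * K x y) s t = c * kform K s t.
Proof.
rewrite /kform -ecombZ; congr ecomb; apply: funext => x.
by rewrite /kcomb ecombZ.
Qed.

Lemma kformB K1 K2 s t :
  kform (fun x y => K1 x y - K2 x y) s t = kform K1 s t - kform K2 s t.
Proof.
have -> : (fun x y => K1 x y - K2 x y) = (fun x y => K1 x y + (-1) * K2 x y).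
  by apply/funeq2P => x y; rewrite mulN1r.
by rewrite kformD kformZ mulN1r.
Qed.

Definition weight_comb (phi : X -> R) s : seq (R * X) :=
  [seq (p.1 * phi p.2, p.2) | p <- s].

Lemma kform_weight K (phi : X -> R) s t :
  kform (fun x y => K x y * (phi x * phi y)) s t =
  kform K (weight_comb phi s) (weight_comb phi t).
Proof.
rewrite /kform /ecomb big_map; apply: eq_bigr => p _ /=.
rewrite /kcomb /ecomb big_map mulr_sumr mulr_sumr; apply: eq_bigr => q _ /=.
ring.
Qed.

Lemma kform_rank1 (phi : X -> R) s t :
  kform (fun x y => phi x * phi y) s t = ecomb phi s * ecomb phi t.
Proof.
rewrite mulrC -ecombZ /kform; congr ecomb; apply: funext => x.
by rewrite /kcomb ecombZ mulrC.
Qed.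

Lemma kform_cat_single K s c z : (forall x y, K x y = K y x) ->
  kform K (s ++ [:: (c, z)]) (s ++ [:: (c, z)]) =
  kform K s s + 2 * c * kcomb K s z + c ^+ 2 * K z z.
Proof.
move=> K_sym.
rewrite kform_catl !kform_catr (kform_sym s) // !kform_single kcomb_single.
ring.
Qed.

Lemma psd_diag_ge0 K x : psd_kernel K -> 0 <= K x x.
Proof.
move=> psdK; have := psd_form_ge0 psdK [:: (1, x)].
by rewrite kform_single kcomb_single !mul1r.
Qed.

Lemma psd_row0 K z y : psd_kernel K -> K z z = 0 -> K z y = 0.
Proof.
move=> psdK Kzz0.
have quad (c : R) : 0 <= K y y + 2 * K z y * c + 0 * c ^+ 2.
  have := psd_form_ge0 psdK ([:: (1, y)] ++ [:: (c, z)]).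
  rewrite kform_cat_single; last exact: psd_sym psdK.
  rewrite kform_single !kcomb_single Kzz0; lra.
have := sqr_le_of_quad_ge0 quad (lexx 0); rewrite mulr0 => sqr_le0.
by apply/eqP; rewrite -sqrf_eq0 eq_le sqr_le0 sqr_ge0.
Qed.

Lemma kform_row0 K c z s : (forall x y, K x y = K y x) -> (forall y, K z y = 0) ->
  kform K ((c, z) :: s) ((c, z) :: s) = kform K s s.
Proof.
move=> K_sym row0.
have kcomb0 t : kcomb K t z = 0 by rewrite /kcomb /ecomb big1 // => p _; rewrite row0 mulr0.
rewrite -cat1s kform_catl !kform_catr (kform_sym s [:: (c, z)]) // !kform_single.
by rewrite !kcomb0 !mulr0 !add0r.
Qed.

Lemma psd_schur_complement K z : psd_kernel K -> 0 < K z z ->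
  psd_kernel (fun x y => K x y - K x z * K z y / K z z).
Proof.
move=> psdK Kzz_gt0; have K_sym := psd_sym psdK.
split=> [x y|s]; first by rewrite (K_sym y x) (K_sym y z) (K_sym z x) (mulrC (K z y)).
have -> : (fun x y => K x y - K x z * K z y / K z z) =
          (fun x y => K x y - (K z z)^-1 * (K x z * K y z)).
  by apply/funeq2P => x y; rewrite (K_sym z y) mulrC.
have row_z : ecomb (fun x => K x z) s = kcomb K s z.
  by rewrite /kcomb; congr ecomb; apply: funext => x; rewrite K_sym.
rewrite kformB kformZ kform_rank1 row_z.
(* completing the square: shift s by a multiple of z *)
have := psd_form_ge0 psdK (s ++ [:: (- (kcomb K s z / K z z), z)]).
rewrite kform_cat_single //; set h := kcomb K s z; set k := K z z.
have -> // : kform K s s + 2 * - (h / k) * h + (- (h / k)) ^+ 2 * k =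
             kform K s s - k^-1 * (h * h).
by field; exact: lt0r_neq0.
Qed.

Theorem psd_mul A B : psd_kernel A -> psd_kernel B ->
  psd_kernel (fun x y => A x y * B x y).
Proof.
move=> psdA psdB; split=> [x y|s]; first by rewrite (psd_sym psdA) (psd_sym psdB).
elim: s B psdB => [|[c z] s IH] B psdB; first by rewrite /kform ecomb_nil.
have AB_sym x y : A x y * B x y = A y x * B y x.
  by rewrite (psd_sym psdA) (psd_sym psdB).
have [Bzz0|Bzz_neq0] := eqVneq (B z z) 0.
  rewrite kform_row0 => [|//|y]; first exact: IH.
  by rewrite (psd_row0 y psdB Bzz0) mulr0.
have Bzz_gt0 : 0 < B z z by rewrite lt_def Bzz_neq0 psd_diag_ge0.
(* Schur: B = B' + B(., z) B(z, .) / B(z, z) with B' psd and zero on the row of z,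
   so z drops out of the form of A B' and induction applies. *)
set B' := fun x y => B x y - B x z * B z y / B z z.
have psdB' : psd_kernel B' := psd_schur_complement psdB Bzz_gt0.
have -> : (fun x y => A x y * B x y) = (fun x y =>
    A x y * B' x y + (B z z)^-1 * (A x y * (B x z * B y z))).
  apply/funeq2P => x y; rewrite /B' (psd_sym psdB z y).
  by field; exact: lt0r_neq0.
rewrite kformD kformZ kform_weight; apply: addr_ge0.
  rewrite kform_row0 => [|x y|y]; [exact: IH | by rewrite (psd_sym psdA) (psd_sym psdB') |].
  by rewrite /B'; field; exact: lt0r_neq0.
by rewrite mulr_ge0 ?invr_ge0 ?(ltW Bzz_gt0) ?(psd_form_ge0 psdA).
Qed.

Lemma psd_add A B : psd_kernel A -> psd_kernel B -> psd_kernel (fun x y => A x y + B x y).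
Proof.
move=> psdA psdB; split=> [x y|s]; first by rewrite (psd_sym psdA) (psd_sym psdB).
by rewrite kformD addr_ge0 ?psd_form_ge0.
Qed.

Lemma psd_scale c K : 0 <= c -> psd_kernel K -> psd_kernel (fun x y => c * K x y).
Proof.
move=> c_ge0 psdK; split=> [x y|s]; first by rewrite (psd_sym psdK).
by rewrite kformZ mulr_ge0 ?psd_form_ge0.
Qed.

Lemma psd_const1 : psd_kernel (fun _ _ => 1).
Proof.
split=> // s.
have -> : (fun _ _ : X => 1 : R) = (fun x y => (fun _ => 1) x * (fun _ => 1) y).
  by apply/funeq2P => x y; rewrite mulr1.
by rewrite kform_rank1 -expr2 sqr_ge0.
Qed.

Lemma psd_const0 : psd_kernel (fun _ _ => 0).
Proof.
split=> // s; rewrite /kform /ecomb big1 // => p _.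
by rewrite /kcomb /ecomb big1 ?mulr0 // => q _; rewrite mulr0.
Qed.

Lemma psd_big (op : R -> R -> R) (idx : R) (I : Type) (r : seq I) (P : pred I)
    (K : I -> X -> X -> R) :
  psd_kernel (fun _ _ => idx) ->
  (forall A B, psd_kernel A -> psd_kernel B -> psd_kernel (fun x y => op (A x y) (B x y))) ->
  (forall i, P i -> psd_kernel (K i)) ->
  psd_kernel (fun x y => \big[op/idx]_(i <- r | P i) K i x y).
Proof.
move=> psd_idx psd_op psdK; elim: r => [|i r IH].
  have -> : (fun x y => \big[op/idx]_(j <- [::] | P j) K j x y) = (fun _ _ => idx).
    by apply/funeq2P => x y; rewrite big_nil.
  exact: psd_idx.
case Pi: (P i).
  have -> : (fun x y => \big[op/idx]_(j <- i :: r | P j) K j x y) =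
            (fun x y => op (K i x y) (\big[op/idx]_(j <- r | P j) K j x y)).
    by apply/funeq2P => x y; rewrite big_cons Pi.
  exact: psd_op (psdK i Pi) IH.
have -> : (fun x y => \big[op/idx]_(j <- i :: r | P j) K j x y) =
          (fun x y => \big[op/idx]_(j <- r | P j) K j x y).
  by apply/funeq2P => x y; rewrite big_cons Pi.
exact: IH.
Qed.

Lemma psd_le_psd K1 K2 : psd_kernel K1 -> psd_le K1 K2 -> psd_kernel K2.
Proof.
move=> psd1 psd12; have := psd_add psd1 psd12.
have -> // : (fun x y => K1 x y + (K2 x y - K1 x y)) = K2.
by apply/funeq2P => x y; rewrite addrC subrK.
Qed.

Lemma psd_le_scale c K1 K2 : 0 <= c -> psd_le K1 K2 ->
  psd_le (fun x y => c * K1 x y) (fun x y => c * K2 x y).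
Proof.
move=> c_ge0 /(psd_scale c_ge0); rewrite /psd_le.
by have -> : (fun x y => c * (K2 x y - K1 x y)) = (fun x y => c * K2 x y - c * K1 x y)
  by apply/funeq2P => x y; rewrite mulrBr.
Qed.

Lemma psd_le_sum (I : Type) (r : seq I) (P : pred I) (K1 K2 : I -> X -> X -> R) :
  (forall i, P i -> psd_le (K1 i) (K2 i)) ->
  psd_le (fun x y => \sum_(i <- r | P i) K1 i x y) (fun x y => \sum_(i <- r | P i) K2 i x y).
Proof.
move=> le12; have := psd_big r psd_const0 (@psd_add) le12; rewrite /psd_le.
by have -> // : (fun x y => \sum_(i <- r | P i) (K2 i x y - K1 i x y)) =
  (fun x y => \sum_(i <- r | P i) K2 i x y - \sum_(i <- r | P i) K1 i x y)
  by apply/funeq2P => x y; rewrite sumrB.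
Qed.

Lemma psd_le_prod (I : Type) (r : seq I) (P : pred I) (K1 K2 : I -> X -> X -> R) :
  (forall i, P i -> psd_kernel (K1 i)) -> (forall i, P i -> psd_le (K1 i) (K2 i)) ->
  psd_le (fun x y => \prod_(i <- r | P i) K1 i x y) (fun x y => \prod_(i <- r | P i) K2 i x y).
Proof.
move=> psd1 le12; rewrite /psd_le /=; elim: r => [|i r IH].
  have -> : (fun x y => \prod_(j <- [::] | P j) K2 j x y - \prod_(j <- [::] | P j) K1 j x y) =
            (fun _ _ => 0) by apply/funeq2P => x y; rewrite !big_nil subrr.
  exact: psd_const0.
have psd2 j : P j -> psd_kernel (K2 j) by move=> Pj; exact: psd_le_psd (psd1 j Pj) (le12 j Pj).
have psd_prod2 := psd_big r psd_const1 (@psd_mul) psd2.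
case Pi: (P i); last first.
  have -> // : (fun x y => \prod_(j <- i :: r | P j) K2 j x y - \prod_(j <- i :: r | P j) K1 j x y) =
    (fun x y => \prod_(j <- r | P j) K2 j x y - \prod_(j <- r | P j) K1 j x y).
  by apply/funeq2P => x y; rewrite !big_cons Pi.
have -> : (fun x y => \prod_(j <- i :: r | P j) K2 j x y - \prod_(j <- i :: r | P j) K1 j x y) =
  (fun x y => (K2 i x y - K1 i x y) * \prod_(j <- r | P j) K2 j x y +
     K1 i x y * (\prod_(j <- r | P j) K2 j x y - \prod_(j <- r | P j) K1 j x y)).
  by apply/funeq2P => x y; rewrite !big_cons Pi; ring.
exact: psd_add (psd_mul (le12 i Pi) psd_prod2) (psd_mul (psd1 i Pi) IH).
Qed.

End PsdKernels.

Lemma psd_comp (R : realType) (X Y : Type) (phi : Y -> X) (K : X -> X -> R) :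
  psd_kernel K -> psd_kernel (fun x y => K (phi x) (phi y)).
Proof.
move=> psdK; split=> [x y|s]; first exact: psd_sym.
have := psd_form_ge0 psdK [seq (p.1, phi p.2) | p <- s].
by rewrite /kform /kcomb /ecomb big_map; under eq_bigr do rewrite big_map.
Qed.

Section RKHS.
Variables (R : realType) (X : Type) (K : X -> X -> R).
Variables (H : (X -> R) -> Prop) (ip : (X -> R) -> (X -> R) -> R).
Hypothesis rk : is_RKHS K H ip.
Implicit Types (f g h : X -> R) (s t : seq (R * X)).

Lemma ip0l h : H h -> ip (fun _ => 0) h = 0.
Proof.
move=> Hh; have := rk_linl rk 1 (rk_zero rk) (rk_zero rk) Hh.
have -> : (fun _ : X => 1 * 0 + 0) = (fun _ => 0 : R) by apply: funext => x; rewrite mulr0 addr0.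
rewrite mul1r; lra.
Qed.

Lemma ip_linr a f g h : H f -> H g -> H h ->
  ip h (fun x => a * f x + g x) = a * ip h f + ip h g.
Proof.
move=> Hf Hg Hh; rewrite (rk_sym rk) ?(rk_linl rk) ?(rk_sym rk Hh Hf) ?(rk_sym rk Hh Hg) //.
exact: (rk_lin rk).
Qed.

Lemma ip_fdiffl f g h : H f -> H g -> H h -> ip (fdiff f g) h = ip f h - ip g h.
Proof.
by move=> Hf Hg Hh; rewrite fdiffE (rk_linl rk) // mulN1r addrC.
Qed.

Lemma fdiff_mem f g : H f -> H g -> H (fdiff f g).
Proof.
by move=> Hf Hg; rewrite fdiffE; exact: (rk_lin rk).
Qed.

Lemma ip_scale a f : H f -> ip (fun x => a * f x + 0) (fun x => a * f x + 0) = a ^+ 2 * ip f f.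
Proof.
move=> Hf; have Hz := rk_zero rk; have Haf := rk_lin rk a Hf Hz.
rewrite (rk_linl rk a Hf Hz Haf) (ip0l Haf) (ip_linr a Hf Hz Hf).
by rewrite (rk_sym rk Hf Hz) (ip0l Hf) addr0 addr0 mulrA expr2.
Qed.

Lemma ip_cauchy_schwarz f g : H f -> H g -> ip f g ^+ 2 <= ip f f * ip g g.
Proof.
move=> Hf Hg; apply: sqr_le_of_quad_ge0; last exact: (rk_pos rk).
move=> c; have Hcgf := rk_lin rk c Hg Hf.
have := rk_pos rk Hcgf.
rewrite (rk_linl rk c Hg Hf Hcgf) (ip_linr c Hg Hf Hg) (ip_linr c Hg Hf Hf).
rewrite (rk_sym rk Hg Hf); lra.
Qed.

Lemma ip_fdiff_fdiff f g : H f -> H g ->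
  ip (fdiff f g) (fdiff f g) = ip f f - 2 * ip f g + ip g g.
Proof.
move=> Hf Hg; have Hfg := fdiff_mem Hf Hg.
rewrite ip_fdiffl // (rk_sym rk Hf Hfg) (rk_sym rk Hg Hfg) !ip_fdiffl //.
by rewrite (rk_sym rk Hg Hf); ring.
Qed.

Lemma kcomb_mem s : H (kcomb K s).
Proof.
elim: s => [|p s IH]; first by rewrite kcomb_nil; exact: rk_zero rk.
by rewrite kcomb_cons; exact: (rk_lin rk) (rk_mem rk _) IH.
Qed.

Lemma ip_kcomb s g : H g -> ip (kcomb K s) g = ecomb g s.
Proof.
move=> Hg; elim: s => [|p s IH]; first by rewrite kcomb_nil ecomb_nil ip0l.
rewrite kcomb_cons (rk_linl rk _ (rk_mem rk _) (kcomb_mem s) Hg) IH ecomb_cons.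
by rewrite (rk_sym rk (rk_mem rk _) Hg) (rk_repr rk).
Qed.

Lemma ip_kcomb_kcomb s t : ip (kcomb K s) (kcomb K t) = kform K s t.
Proof. exact/ip_kcomb/kcomb_mem. Qed.

Lemma rkhs_kernel_sym x y : K x y = K y x.
Proof.
have := rk_sym rk (rk_mem rk y) (rk_mem rk x).
by rewrite (rk_repr rk _ (rk_mem rk y)) (rk_repr rk _ (rk_mem rk x)).
Qed.

Lemma rkhs_psd : psd_kernel K.
Proof.
split=> [|s]; first exact: rkhs_kernel_sym.
by rewrite -ip_kcomb_kcomb; exact/(rk_pos rk)/kcomb_mem.
Qed.

End RKHS.

Section RKHSMembership.
Variables (R : realType) (X : Type) (K : X -> X -> R).
Variables (H : (X -> R) -> Prop) (ip : (X -> R) -> (X -> R) -> R).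
Hypothesis rk : is_RKHS K H ip.
Variables (f : X -> R) (c : R).
Hypothesis c_ge0 : 0 <= c.
Hypothesis ecomb_bound : forall s, ecomb f s ^+ 2 <= c * kform K s s.
Implicit Types (s t : seq (R * X)).

(* The minimizer of [energy] over H is f itself, with minimum -||f||^2. *)
Let energy s := kform K s s - 2 * ecomb f s.
Let mu := inf (range energy).

Lemma energy_ge s : - c <= energy s.
Proof.
have := c_ge0; have := ecomb_bound s; have := psd_form_ge0 (rkhs_psd rk) s.
rewrite /energy; move: (ecomb f s) (kform K s s) => L B B_ge0 L_le c_nonneg.
have [L_le0|L_gt0] := real_leP (num_real L) (num_real 0); first lra.
have : 0 < 2 * L + B + c by lra.
have : 0 <= (B - c) ^+ 2 by exact: sqr_ge0.
nra.
Qed.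

Lemma energy_bounded : has_lbound (range energy).
Proof. by exists (- c) => _ [s _ <-]; exact: energy_ge. Qed.

Lemma inf_energy_le s : mu <= energy s.
Proof. by apply: ge_inf energy_bounded _ _; exists s. Qed.

Lemma inf_energy_ge : - c <= mu.
Proof. by apply: lb_le_inf; [exists (energy [::]), [::] | move=> _ [s _ <-]; exact: energy_ge]. Qed.

Lemma energy_has_inf : has_inf (range energy).
Proof. by split; [exists (energy [::]), [::] | exact: energy_bounded]. Qed.

Lemma exists_minimizing_seq : exists sq : nat -> seq (R * X),
  forall e, 0 < e -> exists N, forall n, (N <= n)%N -> energy (sq n) < mu + e.
Proof.
have near_inf (n : nat) : exists s, energy s < mu + n.+1%:R^-1.
  have inv_gt0 : 0 < n.+1%:R^-1 :> R by rewrite invr_gt0 ltr0Sn.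
  by have [_ [s _ <-]] := inf_adherent inv_gt0 energy_has_inf; exists s.
have [sq sq_near] := choice near_inf; exists sq => e /inv_succ_eventually_lt [N N_lt].
by exists N => n /N_lt lt_e; rewrite (lt_trans (sq_near n)) // ltrD2l.
Qed.

(* Parallelogram law, applied around the midpoint of s1 and s2. *)
Lemma kform_sub_le_energy s1 s2 :
  kform K (s1 ++ scale_comb (-1) s2) (s1 ++ scale_comb (-1) s2) <=
  2 * (energy s1 - mu) + 2 * (energy s2 - mu).
Proof.
have := inf_energy_le (scale_comb 2^-1 s1 ++ scale_comb 2^-1 s2); rewrite /energy.
rewrite !kform_catl !kform_catr !kform_scalel !kform_scaler !ecomb_cat !ecomb_scale.
rewrite (kform_sym s2 s1 (rkhs_kernel_sym rk)); lra.
Qed.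

(* Minimality of the energy along the line through s in direction [(1, y)]. *)
Lemma kcomb_sub_sqr_le s y : (kcomb K s y - f y) ^+ 2 <= (energy s - mu) * K y y.
Proof.
apply: sqr_le_of_quad_ge0 (psd_diag_ge0 y (rkhs_psd rk)) => a.
have := inf_energy_le (s ++ [:: (a, y)]); rewrite /energy kform_cat_single; last exact: rkhs_kernel_sym rk.
rewrite ecomb_cat ecomb_cons ecomb_nil /=; lra.
Qed.

Section NearMinimizers.
Variable g : X -> R.
Hypothesis Hg : H g.
Hypothesis near_min : forall e, 0 < e -> exists s,
  energy s < mu + e /\ ip (fdiff (kcomb K s) g) (fdiff (kcomb K s) g) < e.

Lemma near_minimizers_limit : g = f.
Proof.
apply: funext => y.
have k_ge0 : 0 <= K y y := psd_diag_ge0 y (rkhs_psd rk).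
have to_g s : (kcomb K s y - g y) ^+ 2 <=
    ip (fdiff (kcomb K s) g) (fdiff (kcomb K s) g) * K y y.
  have Hs := kcomb_mem rk s; have Hy := rk_mem rk y.
  have := ip_cauchy_schwarz rk (fdiff_mem rk Hs Hg) Hy.
  by rewrite (ip_fdiffl rk Hs Hg Hy) (rk_repr rk y Hs) (rk_repr rk y Hg) (rk_repr rk y Hy).
apply/eqP; rewrite -subr_eq0 -sqrf_eq0 eq_le sqr_ge0 andbT.
apply: (le0_of_le_mul_eps (k := 4 * K y y)); first lra.
move=> e /near_min [s [energy_lt dist_lt]].
have := to_g s; have := kcomb_sub_sqr_le s y; have := inf_energy_le s.
move: energy_lt dist_lt k_ge0; move: (energy s) (ip _ _) (kcomb K s y) (K y y).
move=> E d a k E_lt d_lt k_ge0 mu_le to_f to_g'.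
have : (E - mu) * k <= e * k by apply: ler_wpM2r; lra.
have : d * k <= e * k by apply: ler_wpM2r => //; lra.
have : 0 <= (2 * a - f y - g y) ^+ 2 := sqr_ge0 _.
nra.
Qed.

End NearMinimizers.

Theorem rkhs_mem_of_ecomb_bound : H f /\ ip f f <= c.
Proof.
have [sq sq_min] := exists_minimizing_seq.
have sq_cauchy e : 0 < e -> exists N, forall n k, (N <= n)%N -> (N <= k)%N ->
    ip (fdiff (kcomb K (sq n)) (kcomb K (sq k))) (fdiff (kcomb K (sq n)) (kcomb K (sq k))) < e.
  move=> e_gt0; have [N N_min] := sq_min (e / 4) ltac:(lra).
  exists N => n k Nn Nk.
  have -> : fdiff (kcomb K (sq n)) (kcomb K (sq k)) = kcomb K (sq n ++ scale_comb (-1) (sq k)).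
    by apply: funext => x; rewrite kcomb_cat kcomb_scale /fdiff mulN1r.
  rewrite (ip_kcomb_kcomb rk); apply: le_lt_trans (kform_sub_le_energy _ _) _.
  have := N_min n Nn; have := N_min k Nk; lra.
have [g [Hg sq_to_g]] := rk_complete rk (fun n => kcomb_mem rk (sq n)) sq_cauchy.
have near_min e : 0 < e -> exists s,
    energy s < mu + e /\ ip (fdiff (kcomb K s) g) (fdiff (kcomb K s) g) < e.
  move=> e_gt0; have [N1 N1_min] := sq_min e e_gt0; have [N2 N2_to_g] := sq_to_g e e_gt0.
  by exists (sq (maxn N1 N2)); rewrite N1_min ?N2_to_g ?leq_maxl ?leq_maxr.
have g_eq_f := near_minimizers_limit Hg near_min; subst g; split=> //.
apply/ler_addgt0Pr => e /near_min [s [_ dist_lt]].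
have := inf_energy_ge; have := inf_energy_le s; move: dist_lt.
rewrite (ip_fdiff_fdiff rk (kcomb_mem rk s) Hg) (ip_kcomb_kcomb rk) (ip_kcomb rk _ Hg).
rewrite /energy; lra.
Qed.

End RKHSMembership.

Section Inclusion.
Variables (R : realType) (X : Type) (K1 K2 : X -> X -> R).
Variables (H1 H2 : (X -> R) -> Prop) (ip1 ip2 : (X -> R) -> (X -> R) -> R).
Hypotheses (rk1 : is_RKHS K1 H1 ip1) (rk2 : is_RKHS K2 H2 ip2).

Theorem rkhs_incl_of_kernel_le : psd_le K1 K2 ->
  forall f, H1 f -> H2 f /\ ip2 f f <= ip1 f f.
Proof.
move=> le12 f H1f; apply: (rkhs_mem_of_ecomb_bound rk2 (rk_pos rk1 H1f)) => s.
have := psd_form_ge0 le12 s; rewrite kformB subr_ge0 => kform_le.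
rewrite -(ip_kcomb rk1 s H1f); apply: le_trans (ip_cauchy_schwarz rk1 (kcomb_mem rk1 s) H1f) _.
by rewrite (ip_kcomb_kcomb rk1) mulrC ler_wpM2l ?(rk_pos rk1).
Qed.

Theorem kernel_le_of_rkhs_incl (c : R) : 0 <= c -> (forall f, H1 f -> H2 f) ->
  (forall f, H1 f -> ip2 f f <= c * ip1 f f) -> psd_le K1 (fun x y => c * K2 x y).
Proof.
move=> c_ge0 incl ip_le; split=> [x y|s].
  by rewrite (rkhs_kernel_sym rk1) (rkhs_kernel_sym rk2).
rewrite kformB kformZ subr_ge0.
have H1s := kcomb_mem rk1 s; have H2s := kcomb_mem rk2 s.
(* <kcomb K2 s, kcomb K1 s>_2 = ||kcomb K1 s||_1^2; apply Cauchy-Schwarz in H2. *)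
have := ip_cauchy_schwarz rk2 H2s (incl _ H1s).
rewrite (ip_kcomb rk2 s (incl _ H1s)) (ip_kcomb_kcomb rk2).
have := ip_le _ H1s; rewrite (ip_kcomb_kcomb rk1).
have := psd_form_ge0 (rkhs_psd rk1) s; have := psd_form_ge0 (rkhs_psd rk2) s.
rewrite -[ecomb _ s]/(kform K1 s s).
move: (kform K1 s s) (kform K2 s s) (ip2 _ _) => a b d b_ge0 a_ge0 d_le sqr_le.
have [->|a_neq0] := eqVneq a 0; first exact: mulr_ge0.
have a_gt0 : 0 < a by rewrite lt_def a_neq0.
rewrite -(ler_pM2l a_gt0) -expr2; apply: le_trans sqr_le _.
have -> : a * (c * b) = b * (c * a) by ring.
exact: ler_wpM2l.
Qed.

Lemma ip_le_of_unit_ball_bound (C : R) : (forall f, H1 f -> H2 f) ->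
  (forall f, H1 f -> rk_norm ip1 f <= 1 -> rk_norm ip2 f <= C) ->
  forall f, H1 f -> ip2 f f <= C ^+ 2 * ip1 f f.
Proof.
move=> incl ball_bound f H1f.
have [r0|r_neq0] := eqVneq (ip1 f f) 0.
  have -> := rk_def rk1 H1f r0.
  by rewrite (ip0l rk2 (rk_zero rk2)) (ip0l rk1 (rk_zero rk1)) mulr0.
have r_gt0 : 0 < ip1 f f by rewrite lt_def r_neq0 (rk_pos rk1).
set a := (Num.sqrt (ip1 f f))^-1.
have a2r : a ^+ 2 * ip1 f f = 1 by rewrite /a exprVn sqr_sqrtr ?mulVf // ltW.
have H1af := rk_lin rk1 a H1f (rk_zero rk1).
have := ball_bound _ H1af; rewrite /rk_norm (ip_scale rk1 a H1f) a2r sqrtr1 lexx.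
move=> /(_ isT); rewrite (ip_scale rk2 a (incl _ H1f)) => sqrt_le.
have le_C2 : a ^+ 2 * ip2 f f <= C ^+ 2.
  have := ler_pM (sqrtr_ge0 _) (sqrtr_ge0 _) sqrt_le sqrt_le.
  rewrite -!expr2 sqr_sqrtr //; apply: mulr_ge0; [exact: sqr_ge0 | exact/(rk_pos rk2)/incl].
have -> : ip2 f f = ip1 f f * (a ^+ 2 * ip2 f f) by rewrite mulrA [_ * a ^+ 2]mulrC a2r mul1r.
by rewrite [C ^+ 2 * _]mulrC ler_wpM2l // ltW.
Qed.

End Inclusion.

Lemma prod1D_subsets (R : comNzRingType) (I : finType) (v : {set I}) (f : I -> R) :
  \prod_(j in v) (1 + f j) = \sum_(u : {set I} | u \subset v) \prod_(j in u) f j.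
Proof.
rewrite big_mkcond /=.
rewrite (eq_bigr (fun j => (if j \in v then f j else 0) + 1)); last first.
  by move=> j _; case: ifP => _; rewrite ?add0r // addrC.
rewrite bigA_distr /= [RHS]big_mkcond /=; apply: eq_bigr => u _.
case: ifP => [uv|/negbT/subsetPn [j ju jv]]; last first.
  by rewrite (bigD1 j) //= ju (negbTE jv) mul0r.
rewrite [RHS]big_mkcond; apply: eq_bigr => j _.
by case: ifP => // ju; rewrite (subsetP uv j ju).
Qed.

Section WeightedProductKernels.
Variables (R : realType) (D : Type) (d : nat).

Lemma M_kernel_T_up (C : R) (eta : {set 'I_d} -> R) (m : D -> D -> R) :
  M_kernel (T_up C eta) m = M_kernel eta (fun s t => C ^+ 2 * (1 + m s t)).
Proof.
apply/funeq2P => x y; rewrite /M_kernel /T_up /prod_kernel.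
under eq_bigr => u _ do rewrite mulr_suml big_mkcond.
rewrite exchange_big /=; apply: eq_bigr => v _.
rewrite -big_mkcond /= -mulr_sumr big_split /= prodr_const prod1D_subsets exprM; ring.
Qed.

Lemma M_kernel_le (eta : {set 'I_d} -> R) (m1 m2 : D -> D -> R) :
  is_weight eta -> psd_kernel m1 -> psd_le m1 m2 -> psd_le (M_kernel eta m1) (M_kernel eta m2).
Proof.
move=> eta_ge0 psd1 le12; rewrite /M_kernel /prod_kernel.
apply: psd_le_sum => u _; apply: psd_le_scale; first exact: eta_ge0.
apply: (@psd_le_prod _ _ _ _ _ (fun j x y => m1 (x j) (y j)) (fun j x y => m2 (x j) (y j))).
  by move=> j _; exact: psd_comp.
by move=> j _; exact: (psd_comp (fun x : 'I_d -> D => x j) le12).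
Qed.

End WeightedProductKernels.

Theorem mainTheorem14 (R : realType) (D : Type) (hD : inhabited D) (d : nat)
  (m mup : D -> D -> R) (C : R) (eta : {set 'I_d} -> R)
  (Hm Hup : (D -> R) -> Prop) (ipm ipup : (D -> R) -> (D -> R) -> R)
  (H1 H2 : (('I_d -> D) -> R) -> Prop)
  (ip1 ip2 : (('I_d -> D) -> R) -> (('I_d -> D) -> R) -> R)
  (* (A1) *)
  (km : reproducing_kernel m) (kup : reproducing_kernel mup)
  (m_nz : exists x y, m x y <> 0) (mup_nz : exists x y, mup x y <> 0)
  (rkm : is_RKHS m Hm ipm)
  (rkup : is_RKHS (fun x y => 1 + mup x y) Hup ipup)
  (incl : forall f, Hm f -> Hup f)
  (C_pos : 0 < C)
  (C_bound : forall f, Hm f -> rk_norm ipm f <= 1 -> rk_norm ipup f <= C)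
  (* (A2) *)
  (eta_S : in_S C eta)
  (* the two RKHSs H(M^{eta,m}) and H(M^{eta^up,m^up}) with eta^up = T^up eta *)
  (rk1 : is_RKHS (M_kernel eta m) H1 ip1)
  (rk2 : is_RKHS (M_kernel (T_up C eta) mup) H2 ip2) :
  (forall f, H1 f -> H2 f) /\
  (forall f, H1 f -> rk_norm ip2 f <= rk_norm ip1 f).
Proof.
have ip_le := ip_le_of_unit_ball_bound rkm rkup incl C_bound.
have m_le : psd_le m (fun s t => C ^+ 2 * (1 + mup s t)).
  exact: kernel_le_of_rkhs_incl rkm rkup _ (sqr_ge0 C) incl ip_le.
have M_le : psd_le (M_kernel eta m) (M_kernel (T_up C eta) mup).
  by rewrite M_kernel_T_up; exact: M_kernel_le eta_S (rkhs_psd rkm) m_le.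
have H1_sub := rkhs_incl_of_kernel_le rk1 rk2 M_le.
split=> [f /H1_sub [] //|f H1f].
have [_ ip2_le] := H1_sub f H1f.
by rewrite /rk_norm ler_sqrt ?(rk_pos rk1).
Qed.
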